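(* If $r$ divides $s$, then $\tau^*(n,P^{(r)}_s)\le\left(\left(\frac{r}{s}\right)^r+o(1)\right)\binom{n}{r}$, where $o(1)\to0$ as $n\to\infty$ with $r,s$ fixed.
   Context: $K^{(r)}_n$ is the ordered complete $r$-uniform hypergraph on $[n]=\{1,\dots,n\}$ with its natural order; a copy of an ordered hypergraph $H$ in $K^{(r)}_n$ is the image of $H$ under an order-preserving injection $V(H)\to[n]$. The natural path $P^{(r)}_s$ has vertices $v_1<\dots<v_s$ and edges all sets of $r$ consecutive vertices $\{v_j,\dots,v_{j+r-1}\}$, $1\le j\le s-r+1$. A fractional $H$-transversal is a function $w$ from the edges of $K^{(r)}_n$ to $[0,\infty)$ such that $\sum_{e\in E(H')}w(e)\ge1$ for every copy $H'$ of $H$ in $K^{(r)}_n$; $\tau^*(n,H)$ is the minimum of $\sum_e w(e)$ over all fractional $H$-transversals. *)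

From HB Require Import structures.
From mathcomp Require Import all_boot all_order all_algebra.
From mathcomp Require Import classical_sets reals.
Set Implicit Arguments. Unset Strict Implicit. Unset Printing Implicit Defensive.
Import Order.TTheory GRing.Theory Num.Theory.
Local Open Scope ring_scope.

(* Vertices of K^(r)_n are 'I_n (= {0,..,n-1}, natural order); its edges are
   the r-element subsets e : {set 'I_n} with #|e| = r. *)
Definition is_edge (n r : nat) (e : {set 'I_n}) : bool := #|e| == r.

(* A copy of the natural path P^(r)_s is given by a strictly increasing
   (= order-preserving injective) map f : 'I_s -> 'I_n.  Its j-th edge
   (0 <= j <= s - r) is the image of the window {j, ..., j+r-1}. *)
Definition order_preserving (s n : nat) (f : 'I_s -> 'I_n) : Prop :=
  forall i j : 'I_s, (i < j)%N -> (f i < f j)%N.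

Definition path_window (s r j : nat) : {set 'I_s} :=
  [set i : 'I_s | (j <= i < j + r)%N].

Definition path_copy_edges (s r n : nat) (f : 'I_s -> 'I_n) : {set {set 'I_n}} :=
  [set f @: path_window s r j | j : 'I_(s - r + 1)].

Definition frac_transversal (R : realType) (n r s : nat)
    (w : {set 'I_n} -> R) : Prop :=
  (forall e : {set 'I_n}, @is_edge n r e -> 0 <= w e) /\
  (forall f : 'I_s -> 'I_n, @order_preserving s n f ->
     1 <= \sum_(e | e \in @path_copy_edges s r n f) w e).

Definition total_weight (R : realType) (n r : nat) (w : {set 'I_n} -> R) : R :=
  \sum_(e : {set 'I_n} | @is_edge n r e) w e.

(* tau^*(n, P^(r)_s): the minimum (= infimum, the LP optimum being attained)
   of the total weight over all fractional transversals. *)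
Definition tau_star_path (R : realType) (n r s : nat) : R :=
  inf [set x : R | exists w : {set 'I_n} -> R,
         @frac_transversal R n r s w /\ x = @total_weight R n r w].

From HB Require Import structures.
From mathcomp Require Import all_boot all_order all_algebra.
From mathcomp Require Import classical_sets reals.
From mathcomp Require Import zify lra.
Import Order.TTheory GRing.Theory Num.Theory.
Set Implicit Arguments. Unset Strict Implicit. Unset Printing Implicit Defensive.

(* Let k = s / r and cut [n] into k consecutive blocks of length m = n / k + 1.
   Give weight 1 / k to every r-set contained in a block; the total weight is
   at most C(m, r) ~ k^-r C(n, r) = (r / s)^r C(n, r).  A copy of P_s^(r) has
   s - r + 1 windows and the block index of its vertices is nondecreasing with
   at most k - 1 jumps; a jump spoils at most r - 1 windows, so at least
   (s - r + 1) - (r - 1)(k - 1) = k windows lie inside a block, giving the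
   copy weight at least 1. *)

Section MonotoneSequences.
Local Open Scope nat_scope.

Lemma sum_shift_le (c : nat -> nat) (M d K : nat) :
  (forall i, M <= i < M + d -> c i <= K) ->
  \sum_(0 <= j < M) c (j + d) <= \sum_(0 <= j < M) c j + d * K.
Proof.
move=> cK.
have -> : \sum_(0 <= j < M) c (j + d) = \sum_(0 + d <= j < M + d) c j.
  by rewrite big_addn addnK.
rewrite add0n (leq_trans (_ : _ <= \sum_(0 <= j < M + d) c j)) //.
  by rewrite (big_cat_nat (leq0n d) (leq_addl M d)) leq_addl.
rewrite (big_cat_nat (leq0n M) (leq_addr d M)) leq_add2l.
rewrite -[d in d * K](addKn M) -sum_nat_const_nat big_nat_cond [X in _ <= X]big_nat_cond.
by apply: leq_sum => i /andP[hi _]; apply: cK.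
Qed.

Lemma count_shift_eq (c : nat -> nat) (M d K : nat) :
  (forall i, M <= i < M + d -> c i <= K) ->
  (forall j, j < M -> c j <= c (j + d)) ->
  M <= \sum_(0 <= j < M) (c j == c (j + d)) + d * K.
Proof.
move=> cK c_mono.
have count_or_jump : M <= \sum_(0 <= j < M) ((c j == c (j + d)) + (c (j + d) - c j)).
  rewrite -[M in M <= _]subn0 -[M - 0]muln1 -sum_nat_const_nat.
  rewrite big_nat_cond [X in _ <= X]big_nat_cond; apply: leq_sum => j /andP[/andP[_ jM] _].
  by have := c_mono j jM; case: eqP => /=; lia.
have telescope : \sum_(0 <= j < M) (c (j + d) - c j) + \sum_(0 <= j < M) c j
                 = \sum_(0 <= j < M) c (j + d).
  rewrite -big_split /=; apply: eq_big_nat => j /andP[_ jM].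
  by rewrite subnK // c_mono.
have := sum_shift_le cK; rewrite big_split /= in count_or_jump; lia.
Qed.
End MonotoneSequences.

Definition block (n m b : nat) : {set 'I_n} := [set x : 'I_n | (x %/ m == b)%N].

Lemma card_block (n m b : nat) : (0 < m)%N -> (#|block n m b| <= m)%N.
Proof.
move=> m0; pose rem (x : 'I_n) : 'I_m := Ordinal (ltn_pmod x m0).
rewrite -(card_in_imset (f := rem)) -?[X in (_ <= X)%N](card_ord m) ?max_card //.
move=> x y; rewrite !inE => /eqP x_b /eqP y_b /(congr1 val) /= xy_mod.
by apply: val_inj; rewrite /= (divn_eq x m) (divn_eq y m) x_b y_b xy_mod.
Qed.

Lemma sum_edges_in_blocks (n r k m : nat) : (0 < m)%N ->
  (\sum_(e | is_edge r e) \sum_(b < k) (e \subset block n m b) <= k * 'C(m, r))%N.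
Proof.
move=> m0; rewrite exchange_big /= -[X in (_ <= X * _)%N](card_ord k) -sum_nat_const.
apply: leq_sum => b _.
have -> : (\sum_(e | is_edge r e) (e \subset block n m b) =
           #|[set e : {set 'I_n} | e \subset block n m b & is_edge r e]|)%N.
  rewrite -sum1_card big_mkcond [RHS]big_mkcond; apply: eq_bigr => e _.
  by rewrite inE; case: is_edge; case: (_ \subset _).
by rewrite cards_draws leq_bin2l // card_block.
Qed.

Section PathCopies.
Context {s n : nat} {f : 'I_s -> 'I_n} (f_inc : order_preserving f).

Lemma order_preserving_inj : injective f.
Proof.
by move=> x y fxy; case: (ltngtP x y) => [/f_inc|/f_inc|/val_inj] //; rewrite fxy ltnn.
Qed.

Lemma order_preserving_homo_le (i j : 'I_s) : (i <= j)%N -> (f i <= f j)%N.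
Proof. by rewrite leq_eqVlt => /orP[/eqP/val_inj -> //|/f_inc/ltnW]. Qed.

Lemma path_window_inj (r M : nat) (j1 j2 : 'I_M) : (0 < r)%N -> (M <= s)%N ->
  path_window s r j1 = path_window s r j2 -> j1 = j2.
Proof.
move=> r0 Ms.
suff le_of_eq (a b : 'I_M) : path_window s r a = path_window s r b -> (b <= a)%N.
  by move=> eq12; apply/val_inj/eqP; rewrite eqn_leq !le_of_eq.
move=> eq_ab; have a_s : (a < s)%N := leq_trans (ltn_ord a) Ms.
have : Ordinal a_s \in path_window s r a by rewrite inE /= leqnn /=; lia.
by rewrite eq_ab inE => /andP[].
Qed.

Lemma sum_path_copy_edges (V : nmodType) (r : nat) (w : {set 'I_n} -> V) :
  (0 < r <= s)%N ->
  (\sum_(e | e \in path_copy_edges r f) w e =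
   \sum_(j : 'I_(s - r + 1)) w (f @: path_window s r j))%R.
Proof.
move=> /andP[r0 rs]; rewrite big_imset //= => j1 j2 _ _ /imset_inj eq12.
by apply: path_window_inj (eq12 order_preserving_inj) => //; lia.
Qed.

Lemma path_windows_in_blocks (m k r : nat) :
  (0 < r <= s)%N -> (0 < m)%N -> (n <= k * m)%N ->
  (s - r + 1 <=
   \sum_(j : 'I_(s - r + 1)) \sum_(b < k) (f @: path_window s r j \subset block n m b)
   + (r - 1) * (k - 1))%N.
Proof.
move=> /andP[r0 rs] m0 n_km.
have s0 : 0 < s by lia.
pose c i := f (insubd (Ordinal s0) i) %/ m.
have c_val (i : 'I_s) : c i = f i %/ m by rewrite /c valKd.
have c_lt_k i : c i < k.
  by rewrite /c ltn_divLR //; exact: leq_trans (ltn_ord _) n_km.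
have c_mono i1 i2 : i1 <= i2 < s -> c i1 <= c i2.
  move=> /andP[le12 i2s]; have i1s : i1 < s := leq_ltn_trans le12 i2s.
  rewrite -[i1]/(Ordinal i1s : nat) -[i2]/(Ordinal i2s : nat) !c_val.
  exact/leq_div2r/order_preserving_homo_le.
have window_sub (j : 'I_(s - r + 1)) : c j = c (j + (r - 1)) ->
    f @: path_window s r j \subset block n m (c j).
  move=> c_eq; apply/fintype.subsetP => x /imsetP[i]; rewrite inE => /andP[ji ijr] ->.
  have := ltn_ord i; have := ltn_ord j => i_s j_M.
  rewrite inE -c_val eqn_leq; apply/andP; split.
  - by rewrite c_eq c_mono //; lia.
  - by rewrite c_mono // ji.
apply: leq_trans (@count_shift_eq c (s - r + 1) (r - 1) (k - 1) _ _) _.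
- by move=> i _; have := c_lt_k i; lia.
- by move=> j jM; apply: c_mono; lia.
rewrite big_mkord leq_add2r; apply: leq_sum => j _.
case: eqP => // /window_sub sub.
by rewrite (bigD1 (Ordinal (c_lt_k j))) //= sub.
Qed.
End PathCopies.

Lemma binomial_block_le (n k r : nat) : 0 < k -> r <= n ->
  k ^ r * 'C((n %/ k).+1, r) * (n - r) ^ r <= 'C(n, r) * (n - r + k) ^ r.
Proof.
move=> k0 rn; rewrite -(leq_pmul2r (fact_gt0 r)) mulnAC -(mulnA (k ^ r)).
rewrite [X in _ <= X]mulnAC !bin_ffact.
have pow_prod a : a ^ r = \prod_(i < r) a by rewrite prod_nat_const card_ord.
rewrite !ffact_prod !pow_prod -!big_split /=; apply: leq_prod => i _.
have ir : i < r := ltn_ord i.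
have block_factor : k * ((n %/ k).+1 - i) <= n - i + k.
  have := divn_eq n k; move: (n %/ k) (n %% k) => q rem; nia.
apply: leq_trans (leq_mul block_factor (leqnn (n - r))) _; nia.
Qed.

Local Open Scope ring_scope.

Lemma tau_star_path_le (R : realType) (n r s : nat) (w : {set 'I_n} -> R) :
  frac_transversal r s w -> tau_star_path R n r s <= total_weight r w.
Proof.
move=> w_tr; apply: ge_inf; last by exists w.
exists 0 => _ [w' [[w'_ge0 _] ->]].
by apply: sumr_ge0 => e; apply: w'_ge0.
Qed.

Definition block_weight (R : realType) (n k : nat) (e : {set 'I_n}) : R :=
  (\sum_(b < k) (e \subset block n (n %/ k).+1 b))%:R / k%:R.
Arguments block_weight : clear implicits.

Lemma block_weight_transversal (R : realType) (n r k : nat) : (0 < r)%N -> (0 < k)%N ->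
  frac_transversal r (k * r) (block_weight R n k).
Proof.
move=> r0 k0; split=> [e _|f f_inc]; first by rewrite divr_ge0.
have r_kr : (0 < r <= k * r)%N by rewrite r0 leq_pmull.
rewrite sum_path_copy_edges // /block_weight -mulr_suml -natr_sum.
rewrite ler_pdivlMr ?ltr0n // mul1r ler_nat.
have n_km : (n <= k * (n %/ k).+1)%N by rewrite mulnC ltnW ?ltn_ceil.
have := path_windows_in_blocks f_inc r_kr (ltn0Sn _) n_km.
move: (\sum_(j < _) _)%N => windows_in_blocks; nia.
Qed.

Lemma total_block_weight_le (R : realType) (n r k : nat) : (0 < k)%N ->
  total_weight r (block_weight R n k) <= 'C((n %/ k).+1, r)%:R.
Proof.
move=> k0; rewrite /total_weight /block_weight -mulr_suml -natr_sum.
rewrite ler_pdivrMr ?ltr0n // -natrM ler_nat mulnC.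
exact: sum_edges_in_blocks.
Qed.

Lemma expr1D_le (R : realDomainType) (x : R) (r : nat) : 0 <= x <= 1 ->
  (1 + x) ^+ r <= 1 + (2 ^+ r - 1) * x.
Proof.
move=> /andP[x0 x1]; elim: r => [|r IH]; first by rewrite !expr0 subrr mul0r addr0.
have c0 : 0 <= 2 ^+ r - 1 :> R by rewrite subr_ge0 exprn_ege1 // ler1n.
have x1' : 0 <= 1 - x by rewrite subr_ge0.
rewrite exprS [2 ^+ r.+1]exprS.
have := ler_wpM2l (addr_ge0 ler01 x0) IH.
have := mulr_ge0 (mulr_ge0 c0 x0) x1'.
move: (2 ^+ r) c0 => c c0; move: ((1 + x) ^+ r) => p; nra.
Qed.

Lemma exprDl_le (R : realFieldType) (a b d : R) (r : nat) : 0 < a -> 0 <= b -> b <= a ->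
  (2 ^+ r - 1) * b <= d * a -> (a + b) ^+ r <= (1 + d) * a ^+ r.
Proof.
move=> a0 b0 ba bd.
have -> : a + b = a * (1 + b / a) by rewrite mulrDr mulr1 mulrCA divff ?mulr1 // gt_eqF.
rewrite exprMn mulrC ler_wpM2r ?exprn_ge0 ?(ltW a0) //.
apply: le_trans (expr1D_le _ _) _.
  by rewrite divr_ge0 ?(ltW a0) //= ler_pdivrMr // mul1r.
by rewrite lerD2l mulrA ler_pdivrMr.
Qed.

Lemma binomial_block_asymptotic (R : archiFieldType) (k r : nat) (eps : R) :
  (0 < k)%N -> 0 < eps ->
  exists N, forall n, (N <= n)%N ->
    'C((n %/ k).+1, r)%:R <= (k%:R^-1 ^+ r + eps) * 'C(n, r)%:R.
Proof.
move=> k0 eps0; have kr0 : 0 < k%:R ^+ r :> R by rewrite exprn_gt0 ?ltr0n.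
pose d := eps * k%:R ^+ r; have d0 : 0 < d by rewrite mulr_gt0.
pose B := Num.truncn ((2 ^+ r - 1) * k%:R / d).
exists (r + k + B.+1)%N => n n_ge.
have a0 : 0 < (n - r)%:R :> R by rewrite ltr0n; lia.
have ka : k%:R <= (n - r)%:R :> R by rewrite ler_nat; lia.
have kd : (2 ^+ r - 1) * k%:R <= d * (n - r)%:R.
  rewrite -ler_pdivrMl // mulrC; apply/ltW/(lt_le_trans (truncnS_gt _)).
  rewrite -/B ler_nat; lia.
have rn : (r <= n)%N by lia.
have bin_le := binomial_block_le k0 rn.
rewrite -(ler_nat R) !natrM !natrX natrD in bin_le.
have pow_le := exprDl_le a0 (ler0n _ k) ka kd.
have -> : k%:R^-1 ^+ r + eps = (1 + d) / k%:R ^+ r.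
  by rewrite /d exprVn mulrDl mul1r mulfK ?gt_eqF.
rewrite mulrAC ler_pdivlMr // mulrC -(ler_pM2r (exprn_gt0 r a0)).
apply: le_trans bin_le _; rewrite mulrAC [X in _ <= X]mulrC ler_wpM2l ?ler0n //.
Qed.

Theorem proposition3p2 (R : realType) (r s : nat) :
  (1 <= r)%N -> (0 < s)%N -> (r %| s)%N ->
  forall eps : R, 0 < eps ->
  exists N : nat, forall n : nat, (N <= n)%N ->
    tau_star_path R n r s <= ((r%:R / s%:R) ^+ r + eps) * ('C(n, r))%:R.
Proof.
move=> r0 s0 r_s eps eps0.
set k := (s %/ r)%N; have s_kr : s = (k * r)%N by rewrite divnK.
have k0 : (0 < k)%N by rewrite divn_gt0 // dvdn_leq.
have -> : r%:R / s%:R = k%:R^-1 :> R.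
  by rewrite s_kr natrM invfM mulrCA divff ?mulr1 // pnatr_eq0 -lt0n.
have [N bin_le] := binomial_block_asymptotic r k0 eps0.
exists N => n /bin_le; apply: le_trans; rewrite s_kr.
apply: le_trans (tau_star_path_le (block_weight_transversal R n r0 k0)) _.
exact: total_block_weight_le.
Qed.
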